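(* Let $s\in C$ and let $\hat\kappa$ be a prime broadcast center of $T$ under $s$. It is known that the subgraph of $T$ induced by $B^s$ is a star. Then $\hat\kappa$ is a center of this star; equivalently, every vertex of $B^s\setminus\{\hat\kappa\}$ is adjacent to $\hat\kappa$ in $T$.
   Context: $T$ is a finite tree; each edge $(u,v)$ carries an interval $[w^-_{u,v},w^+_{u,v}]$ of non-negative reals. A scenario $s$ assigns to every edge a weight $w^s_{u,v}\in[w^-_{u,v},w^+_{u,v}]$; $C$ is the set of all scenarios. A constant $\rho>0$ is fixed. Broadcast time (postal model): for a subtree $G$ of $T$ and $u\in V(G)$, $b^s(u,G)=0$ if $u$ has no neighbour in $G$; otherwise, if $v_1,\dots,v_h$ are the neighbours of $u$ in $G$ and $G_{v}$ is the component of $G-u$ containing $v$, $b^s(u,G)=\min_{\pi}\max_{1\le k\le h}\big(k\rho+w^s_{u,v_{\pi(k)}}+b^s(v_{\pi(k)},G_{v_{\pi(k)}})\big)$ over permutations $\pi$. $B^s=\{u: b^s(u,T)\le b^s(v,T)\ \forall v\in V(T)\}$ is the set of broadcast centers. For distinct $x,y$, $T_{x,y}$ is the component of $T-x$ containing $y$ and $\bar T_{x,y}$ the subtree induced by $V(T)\setminus V(T_{x,y})$. A vertex $\hat\kappa\in B^s$ is a prime broadcast center under $s$ if $b^s(\hat\kappa,\bar T_{\hat\kappa,u})\ge b^s(u,\bar T_{u,\hat\kappa})$ for every neighbour $u$ of $\hat\kappa$. A star is a tree with one or two vertices, or with exactly one vertex of degree greater than one; in the last case that vertex is the center, in a one-vertex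 star the vertex is the center, and in a two-vertex star either vertex is a center. *)

From mathcomp Require Import all_boot all_order all_algebra.
Set Implicit Arguments. Unset Strict Implicit. Unset Printing Implicit Defensive.
Import Order.TTheory GRing.Theory Num.Theory.
Local Open Scope ring_scope.

Section Broadcast.
Variable R : realFieldType.
Variable V : finType.

(* A finite tree on vertex set V, given by an adjacency relation e.
   Edges are the unordered pairs {x,y} with e x y; the ordered pairs
   (x,y) with e x y therefore number 2 * (#edges). *)
Definition is_tree (e : rel V) : Prop :=
  [/\ (0 < #|V|)%N, symmetric e, irreflexive e,
      (forall x y, connect e x y) &
      #|[set p : V * V | e p.1 p.2]| = (2 * (#|V| - 1))%N].

Variable e : rel V.

Definition restr (S : {set V}) : rel V :=
  [rel x y | [&& x \in S, y \in S & e x y]].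

Definition comp (G : {set V}) (u v : V) : {set V} :=
  [set x in G :\ u | connect (restr (G :\ u)) v x].

Variable w : V -> V -> R.
Variable rho : R.

Definition order_cost (c : V -> R) (x0 : V) (p : seq V) : R :=
  \big[Num.max/0]_(i < size p) ((i.+1)%:R * rho + c (nth x0 p i)).

(* Broadcast time b(u,G) (postal model), computed with a fuel argument
   (fuel #|V| is always sufficient since components strictly shrink). *)
Fixpoint bcast (fuel : nat) (G : {set V}) (u : V) : R :=
  match fuel with
  | 0 => 0
  | n.+1 =>
    let N := [seq v <- enum G | e u v] in
    if N is [::] then 0 else
    let c := fun v => w u v + bcast n (comp G u v) v in
    \big[Num.min/order_cost c u N]_(p <- permutations N) order_cost c u p
  end.

Definition btime (G : {set V}) (u : V) : R := bcast #|V| G u.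

Definition bcenters : {set V} :=
  [set u | [forall v, btime setT u <= btime setT v]].

Definition Tsub (x y : V) : {set V} := comp setT x y.
Definition Tbar (x y : V) : {set V} := ~: Tsub x y.

Definition prime_bcenter (k : V) : Prop :=
  k \in bcenters /\
  forall u, e k u -> btime (Tbar u k) u <= btime (Tbar k u) k.

End Broadcast.

From Pilot Require Import Defs.
From mathcomp Require Import all_boot all_order all_algebra.
From mathcomp Require Import zify lra.
Set Implicit Arguments. Unset Strict Implicit. Unset Printing Implicit Defensive.
Import Order.TTheory GRing.Theory Num.Theory.

(* Let [v] be a broadcast center that is not adjacent to [k], and let [x] be the
   neighbour of [k] on the path to [v].  Every step from [v] towards [x] costs at
   least [rho] more, so [b(v,T) >= 2 rho + w(x,k) + b(k, Tbar_{k,x})].  Conversely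
   [k] may inform [x] first and then follow an optimal schedule on its own side;
   primality says [x]'s side is not the bottleneck, whence
   [b(k,T) <= rho + w(k,x) + b(k, Tbar_{k,x})] and [b(v,T) > b(k,T)].
   The tree structure enters through the edge count [2(|V| - 1)]: deleting an edge
   disconnects its endpoints, so the two sides of an edge partition the vertices. *)

Section Components.
Variables (V : finType) (e : rel V).

Lemma connect_ind (r : rel V) (P : V -> Prop) a :
  P a -> (forall x y, P x -> r x y -> P y) -> forall z, connect r a z -> P z.
Proof.
move=> Pa Pr z /connectP[p + ->]; elim: p a Pa => //= x p IH a Pa /andP[ax].
exact/IH/(Pr a x).
Qed.

Lemma connect_restrT x y : connect (restr e setT) x y = connect e x y.
Proof. by apply: eq_connect => s t; rewrite /restr /= !in_setT. Qed.

Lemma restrD1 (S : {set V}) x s t :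
  restr e (S :\ x) s t = [&& s != x, t != x & restr e S s t].
Proof. by rewrite /restr /= !in_setD1; case: (s != x); case: (t != x); rewrite ?andbF. Qed.

Lemma restrTD1 x s t : restr e (setT :\ x) s t = [&& s != x, t != x & e s t].
Proof. by rewrite restrD1 /restr /= !in_setT. Qed.

Lemma in_Tsub x y z :
  (z \in Tsub e x y) = (z != x) && connect (restr e (setT :\ x)) y z.
Proof. by rewrite /Tsub /Defs.comp inE in_setD1 in_setT andbT. Qed.

Lemma connect_restr_sub (A B : {set V}) x y :
  A \subset B -> connect (restr e A) x y -> connect (restr e B) x y.
Proof.
move=> AB; apply: connect_sub => s t /and3P[sA tA st]; apply: connect1.
by rewrite /restr /= (subsetP AB _ sA) (subsetP AB _ tA).
Qed.

Lemma connect_restr_closed (A B : {set V}) y :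
  y \in B -> (forall z, connect (restr e A) y z -> z \in A -> z \in B) ->
  forall z, connect (restr e A) y z -> connect (restr e B) y z.
Proof.
move=> yB AB z cAz.
suff [] : connect (restr e B) y z /\ connect (restr e A) y z by [].
move: z cAz; apply: connect_ind; first by rewrite !connect0.
move=> s t [cBs cAs] /[dup] st /and3P[sA tA _].
have cAt : connect (restr e A) y t by apply: connect_trans cAs (connect1 st).
split=> //; apply: connect_trans cBs (connect1 _).
by case/and3P: st => _ _ st; rewrite /restr /= (AB s cAs sA) (AB t cAt tA).
Qed.

(* In the third case the walk is cut after its last visit to [x]. *)
Lemma connect_restrD1P (S : {set V}) x s z : connect (restr e S) s z ->
  [\/ z = x, connect (restr e (S :\ x)) s z /\ s != x
   | exists y, [/\ e x y, y \in S, y != x & connect (restr e (S :\ x)) y z]].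
Proof.
move: z; apply: connect_ind.
  by case: (eqVneq s x) => [->|sx]; [constructor 1 | constructor 2; rewrite connect0].
move=> t z IH /[dup] tz /and3P[tS zS etz].
case: (eqVneq z x) => [->|zx]; first by constructor 1.
case: (eqVneq t x) => [tx|tx]; first by constructor 3; exists z; split=> //; rewrite -tx.
have tz' : restr e (S :\ x) t z by rewrite restrD1 zx tx tz.
case: IH => [tx'|[c sx]|[y [xy yS yx c]]]; first by rewrite tx' eqxx in tx.
  by constructor 2; split=> //; apply: connect_trans c (connect1 tz').
by constructor 3; exists y; split=> //; apply: connect_trans c (connect1 tz').
Qed.

Lemma connect_restr_in (S : {set V}) y z :
  y \in S -> connect (restr e S) y z -> z \in S.
Proof.
by move=> yS; move: z; apply: connect_ind => // s t _ /and3P[].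
Qed.

Lemma Tsub_root x y : x != y -> y \in Tsub e x y.
Proof. by rewrite in_Tsub connect0 eq_sym andbT. Qed.

Lemma Tsub_step x y s t : s \in Tsub e x y -> e s t -> t != x -> t \in Tsub e x y.
Proof.
rewrite !in_Tsub => /andP[sx ys] st tx; rewrite tx.
by apply: connect_trans ys (connect1 _); rewrite restrTD1 sx tx.
Qed.

Lemma Tsub_cover x z : connect e x z -> z != x -> exists2 y, e x y & z \in Tsub e x y.
Proof.
rewrite -connect_restrT => /(connect_restrD1P x)[->|[_ /eqP //]|[y [xy _ _ yz]]] zx.
  by rewrite eqxx in zx.
by exists y; rewrite // in_Tsub zx.
Qed.

Lemma comp_subset (G : {set V}) u y : Defs.comp e G u y \subset G :\ u.
Proof. by apply/subsetP => z; rewrite inE => /andP[]. Qed.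

Hypothesis esym : symmetric e.

Lemma connect_restr_sym (S : {set V}) x y :
  connect (restr e S) x y = connect (restr e S) y x.
Proof. by apply: sym_connect_sym => s t; rewrite /restr /= esym andbCA. Qed.

Hypothesis eirr : irreflexive e.

Lemma edge_neq x y : e x y -> x != y.
Proof. by apply: contraTneq => ->; rewrite eirr. Qed.

End Components.

Section SpanningArcs.
Variables (V : finType) (r : rel V) (a : V).
Hypotheses (rsym : symmetric r) (rconn : forall z, connect r a z).

Fixpoint ball k : {set V} :=
  if k is k'.+1 then ball k' :|: [set y | [exists x in ball k', r x y]] else [set a].

Lemma ball_exists z : exists k, z \in ball k.
Proof.
move: z (rconn z); apply: connect_ind; first by exists 0; rewrite /= set11.
move=> x y [k xk] xy; exists k.+1; rewrite /= in_setU inE; apply/orP; right.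
by apply/existsP; exists x; rewrite xk.
Qed.

Definition depth z := ex_minn (ball_exists z).

Lemma parent_exists z : z != a -> exists x, (depth x < depth z)%N && r x z.
Proof.
move=> za; rewrite /depth; case: ex_minnP => [[|d]] /=; first by rewrite inE (negbTE za).
rewrite in_setU inE => /orP[zd|/existsP[x /andP[xd xz]]] dmin.
  by have := dmin _ zd; rewrite ltnn.
by exists x; rewrite xz andbT; case: ex_minnP => d' _ /(_ _ xd); lia.
Qed.

Definition parent z := odflt a [pick x | (depth x < depth z)%N && r x z].

Lemma parentP z : z != a -> (depth (parent z) < depth z)%N && r (parent z) z.
Proof.
move=> za; rewrite /parent; case: pickP => [x //|none].
by have [x] := parent_exists za; rewrite none.
Qed.

(* The arcs [(parent z, z)] and [(z, parent z)], [z != a], are pairwise distinct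
   because [depth] decreases strictly along [parent]. *)
Lemma card_arcs_connected : (2 * (#|V| - 1) <= #|[set q : V * V | r q.1 q.2]|)%N.
Proof.
set D := [set~ a]; have cardD : #|D| = (#|V| - 1)%N by rewrite cardsC1; lia.
set down := [set (parent z, z) | z in D]; set up := [set (z, parent z) | z in D].
have cdown : #|down| = #|D| by apply: card_in_imset => x y _ _ [].
have cup : #|up| = #|D| by apply: card_in_imset => x y _ _ [].
have disj : down :&: up = set0.
  apply/setP => q; rewrite !inE; apply/negP.
  case/andP=> /imsetP[x + ->] /imsetP[y + [xy yx]]; rewrite !inE => /parentP + /parentP.
  by rewrite xy -yx => /andP[+ _] /andP[+ _]; lia.
have sub : down :|: up \subset [set q : V * V | r q.1 q.2].
  apply/subsetP => q; rewrite in_setU => /orP[] /imsetP[x + ->];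
    by rewrite !inE /= => /parentP/andP[_]; rewrite // rsym.
by have := subset_leq_card sub; rewrite cardsU disj cards0 cdown cup cardD; lia.
Qed.

End SpanningArcs.

Definition rem_edge (V : eqType) (r : rel V) (a b : V) : rel V :=
  [rel s t | r s t && ~~ ((s == a) && (t == b) || (s == b) && (t == a))].

Lemma rem_edge_sym (V : eqType) (r : rel V) a b : symmetric r -> symmetric (rem_edge r a b).
Proof.
move=> rsym s t; rewrite /rem_edge /= rsym; congr (_ && ~~ _).
by case: (s == a); case: (t == b); case: (s == b); case: (t == a).
Qed.

Lemma connect_restrD1_rem_edge (V : finType) (e : rel V) a b x s t :
  (x == a) || (x == b) -> connect (restr e (setT :\ x)) s t -> connect (rem_edge e a b) s t.
Proof.
move=> xab; apply: connect_sub => u v; rewrite restrTD1 => /and3P[ux vx uv].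
by apply: connect1; case/orP: xab => /eqP xE; rewrite /rem_edge /= uv -xE (negbTE ux) (negbTE vx) ?andbF.
Qed.

Section Tree.
Variables (V : finType) (e : rel V).
Hypothesis tree : is_tree e.

Let esym : symmetric e. Proof. by case: tree. Qed.
Let eirr : irreflexive e. Proof. by case: tree. Qed.
Let econn : forall x y, connect e x y. Proof. by case: tree. Qed.

(* Otherwise [rem_edge e a b] would be connected with two arcs fewer than [e],
   contradicting [card_arcs_connected]. *)
Lemma tree_rem_edge_disconnected a b : e a b -> ~ connect (rem_edge e a b) a b.
Proof.
move=> eab cab; set e' := rem_edge e a b.
have e'conn z : connect e' a z.
  move: z (econn a z); apply: connect_ind => [|s t cs st]; first exact: connect0.
  case: (boolP ((s == a) && (t == b))) => [/andP[_ /eqP -> //]|h1].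
  case: (boolP ((s == b) && (t == a))) => [/andP[_ /eqP ->]|h2]; first exact: connect0.
  by apply: connect_trans cs (connect1 _); rewrite /e' /rem_edge /= st negb_or h1 h2.
have ab := edge_neq eirr eab.
have arcsE : [set q : V * V | e' q.1 q.2] = [set q : V * V | e q.1 q.2] :\ (a, b) :\ (b, a).
  apply/setP => [[s t]]; rewrite !inE /e' /rem_edge /= !xpair_eqE.
  by case: (e s t); case: (s == a); case: (t == b); case: (s == b); case: (t == a).
have := card_arcs_connected (rem_edge_sym a b esym) e'conn; rewrite arcsE.
have := cardsD1 (a, b) [set q : V * V | e q.1 q.2].
have := cardsD1 (b, a) ([set q : V * V | e q.1 q.2] :\ (a, b)).
rewrite !inE /= !xpair_eqE eab (esym b a) eab (negbTE ab) andbF /=.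
have : (1 < #|V|)%N by have := max_card [set a; b]; rewrite cards2 ab.
by case: tree => _ _ _ _ -> _ -> E; rewrite E; lia.
Qed.

Lemma Tsub_disjoint a b z : e a b -> z \in Tsub e b a -> z \in Tsub e a b -> False.
Proof.
move=> eab; rewrite !in_Tsub => /andP[_ az] /andP[_ bz].
rewrite connect_restr_sym // in bz.
apply: (tree_rem_edge_disconnected eab); apply: (@connect_trans _ _ z).
  by apply: (connect_restrD1_rem_edge (x := b)) az; rewrite eqxx orbT.
by apply: (connect_restrD1_rem_edge (x := a)) bz; rewrite eqxx.
Qed.

Lemma Tsub_closed a b y z : e a b -> y \in Tsub e a b ->
  connect (restr e (setT :\ b)) y z -> z \in Tsub e a b.
Proof.
move=> eab yT; move: z; apply: connect_ind => // s t sT /and3P[sb tb st].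
rewrite !in_setD1 !in_setT !andbT in sb tb.
case: (eqVneq t a) => [ta|ta]; last exact: Tsub_step sT st ta.
have ba : b != a by rewrite eq_sym (edge_neq eirr eab).
have as_ : e a s by rewrite esym -ta.
have sT' : s \in Tsub e b a := Tsub_step (Tsub_root e ba) as_ sb.
by case: (Tsub_disjoint eab sT' sT).
Qed.

Lemma TbarE a b : e a b -> Tbar e b a = Tsub e a b.
Proof.
move=> eab; have ba : b != a by rewrite eq_sym (edge_neq eirr eab).
apply/setP => z; rewrite inE; apply/idP/idP => [zba|zab]; last first.
  by apply/negP => zba; apply: Tsub_disjoint eab zba zab.
have za : z != a by apply: contraNneq zba => ->; rewrite Tsub_root.
have [y ay zy] := Tsub_cover (econn a z) za.
have [<- //|yb] := eqVneq y b.
have yba : y \in Tsub e b a := Tsub_step (Tsub_root e ba) ay yb.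
move: zy; rewrite in_Tsub => /andP[_ /(Tsub_closed _ yba)].
by rewrite esym (negbTE zba) => /(_ eab).
Qed.

Definition rooted (G : {set V}) u := G = setT \/ exists2 p, e p u & G = Tsub e p u.

Lemma rooted_mem G u : rooted G u -> u \in G.
Proof.
by case=> [->|[p pu ->]]; rewrite ?in_setT // Tsub_root // (edge_neq eirr pu).
Qed.

Lemma comp_rooted G u y : rooted G u -> y \in G -> e u y -> Defs.comp e G u y = Tsub e u y.
Proof.
case=> [->|[p pu ->]] // yG uy; apply/setP => z.
rewrite /Defs.comp inE in_Tsub; apply/andP/andP => [[/setD1P[zu _] cz]|[zu cz]].
  by split=> //; apply: connect_restr_sub cz; apply/setSD/subsetT.
have yB : y \in Tsub e p u :\ u by rewrite in_setD1 yG eq_sym (edge_neq eirr uy).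
have cB : connect (restr e (Tsub e p u :\ u)) y z.
  apply: connect_restr_closed yB _ _ cz => t yt; rewrite !in_setD1 => /andP[tu _].
  by rewrite tu (Tsub_closed pu yG yt).
by split=> //; apply: connect_restr_in yB cB.
Qed.

(* The first step of the path from [u] to the edge [q a]. *)
Lemma next_toward G u q a : rooted G u -> a \in G -> e q a -> u \in Tsub e a q -> u != q ->
  exists y, [/\ e u y, y \in G, a \in Tsub e u y & y \in Tsub e a q].
Proof.
move=> rG aG qa uT uq.
have qu : q != u by rewrite eq_sym.
have [y uy qy] := Tsub_cover (econn u q) qu.
have au : a != u by move: uT; rewrite in_Tsub eq_sym => /andP[].
have ya : y != a.
  apply/eqP => ya; subst y.
  have eau : e a u by rewrite esym.
  have uqa : u \in Tsub e q a := Tsub_step (Tsub_root e (edge_neq eirr qa)) eau uq.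
  by apply: (Tsub_disjoint (a := a) (b := q)) uqa uT; rewrite esym.
have ay : a \in Tsub e u y := Tsub_step qy qa au.
exists y; split=> //; last exact: Tsub_step uT uy ya.
case: rG => [->|[p pu GE]]; first by rewrite in_setT.
have yp : y != p.
  apply/eqP => yp; apply: (@Tsub_disjoint p u a pu); first by rewrite -yp.
  by rewrite -GE.
by rewrite GE; apply: Tsub_step (Tsub_root e (edge_neq eirr pu)) uy yp.
Qed.

End Tree.

Local Open Scope ring_scope.

Lemma bigmin_seq_attained disp (T : orderType disp) (I : eqType) (s : seq I) (f : I -> T) x0 :
  \big[Order.min/x0]_(i <- s) f i = x0 \/
  exists2 i, i \in s & \big[Order.min/x0]_(j <- s) f j = f i.
Proof.
elim: s => [|j s IH]; first by left; rewrite big_nil.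
rewrite big_cons; case: leP => _; first by right; exists j; rewrite ?mem_head.
by case: IH => [->|[i si ->]]; [left | right; exists i; rewrite // in_cons si orbT].
Qed.

Section OrderCost.
Variables (R : realFieldType) (V : finType) (rho : R).
Hypothesis rho_ge0 : 0 <= rho.
Implicit Types (c : V -> R) (p N : seq V).

Lemma order_cost_eq c c' x p :
  {in p, c =1 c'} -> order_cost rho c x p = order_cost rho c' x p.
Proof. by move=> cc'; apply: eq_bigr => i _; rewrite cc' // mem_nth. Qed.

Lemma order_cost_ge c x p y : y \in p -> rho + c y <= order_cost rho c x p.
Proof.
move=> yp; have ip : (index y p < size p)%N by rewrite index_mem.
apply: le_trans (le_bigmax _ _ (Ordinal ip)); rewrite /= nth_index //.
by rewrite lerD2r -[leLHS]mul1r ler_wpM2r // ler1n.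
Qed.

Lemma order_cost_cons c x y p :
  order_cost rho c x (y :: p) <= Num.max (rho + c y) (rho + order_cost rho c x p).
Proof.
rewrite /order_cost big_ord_recl /= mul1r; apply: le_max2 => //.
apply: bigmax_le => [|i _]; first by rewrite addr_ge0 ?bigmax_ge_id.
rewrite /= -[(bump 0 i).+1]/(i.+2) -nat1r mulrDl mul1r -addrA lerD2l.
exact: le_bigmax.
Qed.

Definition min_order_cost c u N : R :=
  if N is [::] then 0 else
  \big[Num.min/order_cost rho c u N]_(p <- permutations N) order_cost rho c u p.

Lemma min_order_cost_eq c c' u N :
  {in N, c =1 c'} -> min_order_cost c u N = min_order_cost c' u N.
Proof.
case: N => // y N cc'; rewrite /min_order_cost (order_cost_eq u cc').
apply: eq_big_seq => p; rewrite mem_permutations => pN.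
by apply: order_cost_eq => z; rewrite (perm_mem pN); apply: cc'.
Qed.

Lemma min_order_cost_ge c u N y : y \in N -> rho + c y <= min_order_cost c u N.
Proof.
case: N => // z N yN; rewrite /min_order_cost big_seq.
apply: le_bigmin => [|p]; first exact: order_cost_ge.
by rewrite mem_permutations => pN; apply: order_cost_ge; rewrite (perm_mem pN).
Qed.

Lemma min_order_cost_le c u N p :
  perm_eq p N -> min_order_cost c u N <= order_cost rho c u p.
Proof.
case: N => [/perm_nilP ->|z N pN]; first by rewrite /order_cost big_ord0.
by apply: ge_bigmin_seq; rewrite ?mem_permutations.
Qed.

Lemma min_order_cost_attained c u N :
  exists2 p, perm_eq p N & min_order_cost c u N = order_cost rho c u p.
Proof.
case: N => [|z N]; first by exists [::]; rewrite // /order_cost big_ord0.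
rewrite /min_order_cost.
have [->|[p]] := bigmin_seq_attained (permutations (z :: N)) (order_cost rho c u)
  (order_cost rho c u (z :: N)); first by exists (z :: N).
by rewrite mem_permutations => pN ->; exists p.
Qed.

End OrderCost.

Section BroadcastTime.
Variables (R : realFieldType) (V : finType) (e : rel V) (w : V -> V -> R) (rho : R).
Hypotheses (tree : is_tree e) (rho_ge0 : 0 <= rho).
Hypothesis w_ge0 : forall u v, e u v -> 0 <= w u v.

Let esym : symmetric e. Proof. by case: tree. Qed.
Let eirr : irreflexive e. Proof. by case: tree. Qed.

Local Notation bcast := (bcast e w rho).
Local Notation btime := (btime e w rho).

Definition nbrs (G : {set V}) u := [seq v <- enum G | e u v].

Lemma mem_nbrs G u v : (v \in nbrs G u) = (v \in G) && e u v.
Proof. by rewrite mem_filter mem_enum andbC. Qed.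

Lemma bcastS n G u : bcast n.+1 G u =
  min_order_cost rho (fun v => w u v + bcast n (Defs.comp e G u v) v) u (nbrs G u).
Proof. by []. Qed.

(* Enough fuel: each recursive call is on a component strictly smaller than [G :\ u]. *)
Lemma bcast_succ n G u : (#|G :\ u| < n)%N -> bcast n G u = bcast n.+1 G u.
Proof.
elim: n G u => [//|n IH] G u Gn; rewrite !bcastS.
apply: min_order_cost_eq => v; rewrite mem_nbrs => /andP[vG uv]; congr (_ + _).
apply: IH; have vC : v \in Defs.comp e G u v.
  by rewrite inE in_setD1 vG connect0 andbT eq_sym (edge_neq eirr uv).
by have := cardsD1 v (Defs.comp e G u v); have := subset_leq_card (comp_subset e G u v);
  rewrite vC; lia.
Qed.

Lemma btime_unfold G u : btime G u =
  min_order_cost rho (fun v => w u v + btime (Defs.comp e G u v) v) u (nbrs G u).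
Proof.
rewrite /Defs.btime bcast_succ // -cardsT; apply/proper_card/properP.
by split; [exact: subsetT | exists u; rewrite ?in_setT ?setD11].
Qed.

Lemma btime_ge_branch G u y : rooted e G u -> y \in G -> e u y ->
  rho + w u y + btime (Tsub e u y) y <= btime G u.
Proof.
move=> rG yG uy; rewrite [btime G u]btime_unfold -(comp_rooted tree rG yG uy) -addrA.
by apply: min_order_cost_ge; rewrite // mem_nbrs yG.
Qed.

Lemma btime_ge_edge G u q a : rooted e G u -> a \in G -> e q a -> u \in Tsub e a q ->
  rho + w q a + btime (Tsub e q a) a <= btime G u.
Proof.
move: {2}#|G| (leqnn #|G|) => n; elim: n G u => [|n IH] G u Gn rG aG qa uT.
  by move: Gn; rewrite leqn0 => /eqP/card0_eq/(_ u); rewrite (rooted_mem tree rG).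
have [uq|uq] := eqVneq u q; first by rewrite -uq in qa *; apply: btime_ge_branch.
have [y [uy yG ay yT]] := next_toward tree rG aG qa uT uq.
apply: le_trans (btime_ge_branch rG yG uy).
have rT : rooted e (Tsub e u y) y by right; exists u.
have Tn : (#|Tsub e u y| <= n)%N.
  have := subset_leq_card (comp_subset e G u y); rewrite (comp_rooted tree rG yG uy).
  by have := cardsD1 u G; rewrite (rooted_mem tree rG); lia.
apply: le_trans (IH _ _ Tn rT ay qa yT) _.
by rewrite lerDr addr_ge0 ?w_ge0.
Qed.

Lemma btime_ge_far_edge G u q a : rooted e G u -> a \in G -> e q a -> u \in Tsub e a q ->
  u != q -> rho + (rho + w q a + btime (Tsub e q a) a) <= btime G u.
Proof.
move=> rG aG qa uT uq; have [y [uy yG ay yT]] := next_toward tree rG aG qa uT uq.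
apply: le_trans (btime_ge_branch rG yG uy); rewrite -[rho + w u y + _]addrA lerD2l.
have rT : rooted e (Tsub e u y) y by right; exists u.
by apply: le_trans (btime_ge_edge rT ay qa yT) _; rewrite lerDr w_ge0.
Qed.

Lemma perm_nbrs_Tsub k x : e k x -> perm_eq (x :: nbrs (Tsub e x k) k) (nbrs setT k).
Proof.
move=> kx; have nbrs_uniq G : uniq (nbrs G k) by rewrite filter_uniq ?enum_uniq.
apply: uniq_perm; rewrite /= ?mem_nbrs ?in_Tsub ?eqxx ?nbrs_uniq //.
move=> z; rewrite in_cons !mem_nbrs in_setT /=.
have [->|zx] := eqVneq z x; first by rewrite kx.
case kz : (e k z); rewrite ?andbF ?andbT //.
by apply: Tsub_step (Tsub_root e _) kz zx; rewrite eq_sym (edge_neq eirr kx).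
Qed.

(* Inform [x] first, then follow an optimal schedule of [k] on its own side of [k x]. *)
Lemma btime_le_prime_nbr k x : e k x ->
  btime (Tbar e x k) x <= btime (Tbar e k x) k ->
  btime setT k <= rho + w k x + btime (Tbar e k x) k.
Proof.
move=> kx; have xk : e x k by rewrite esym.
rewrite (TbarE tree kx) (TbarE tree xk); set G := Tsub e x k => prime.
have rG : rooted e G k by right; exists x.
pose cG v := w k v + btime (Defs.comp e G k v) v.
have [p pN bG] := min_order_cost_attained rho cG k (nbrs G k).
rewrite btime_unfold; set cT := fun v => _.
have pT : perm_eq (x :: p) (nbrs setT k).
  by apply: perm_trans (perm_nbrs_Tsub kx); rewrite perm_cons.
apply: le_trans (min_order_cost_le rho cT k pT) _.
apply: le_trans (order_cost_cons rho_ge0 cT k x p) _.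
have -> : order_cost rho cT k p = order_cost rho cG k p.
  apply: order_cost_eq => z; rewrite (perm_mem pN) mem_nbrs => /andP[zG kz].
  by rewrite /cT /cG (comp_rooted tree rG zG kz).
have bGk : btime G k = order_cost rho cG k p by rewrite btime_unfold bG.
rewrite bGk in prime *; rewrite ge_max -!addrA !lerD2l lerDr w_ge0 // andbT.
exact: prime.
Qed.

End BroadcastTime.

Theorem lemma6 (R : realFieldType) (V : finType) (e : rel V)
  (wlo whi : V -> V -> R) (rho : R) (ws : V -> V -> R) (k : V) :
  is_tree e ->
  0 < rho ->
  (forall u v, e u v -> 0 <= wlo u v /\ wlo u v <= whi u v) ->
  (forall u v, e u v -> wlo u v = wlo v u /\ whi u v = whi v u) ->
  (forall u v, e u v -> wlo u v <= ws u v /\ ws u v <= whi u v) ->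
  (forall u v, e u v -> ws u v = ws v u) ->
  prime_bcenter e ws rho k ->
  forall v, v \in bcenters e ws rho -> v != k -> e k v.
Proof.
move=> tree rho_gt0 wlo_ok _ ws_in ws_sym [_ prime] v vB vk.
have rho_ge0 := ltW rho_gt0.
have ws_ge0 u u' : e u u' -> 0 <= ws u u'.
  by move=> uu'; case: (wlo_ok _ _ uu') (ws_in _ _ uu') => lo0 _ [lo _]; apply: le_trans lo.
have [_ esym _ econn _] := tree.
apply/negPn/negP => kv.
have [x kx vx] := Tsub_cover (econn k v) vk.
have xk : e x k by rewrite esym.
have vx' : v != x by apply: contraNneq kv => ->.
have far := btime_ge_far_edge tree rho_ge0 ws_ge0 (or_introl erefl) (in_setT k) xk vx vx'.
have near := btime_le_prime_nbr tree rho_ge0 ws_ge0 kx (prime x kx).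
have center : btime e ws rho setT v <= btime e ws rho setT k.
  by move: vB; rewrite inE => /forallP.
rewrite (TbarE tree xk) (ws_sym _ _ kx) in near.
lra.
Qed.
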